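(* Let $\mathrm{k}\ge1$ and consider real coefficients $a_j$ ($0\le j\le\mathrm{k}-1$), $b_j$ ($0\le j\le\mathrm{k}$), $c_j$ ($0\le j\le\mathrm{k}-1$) with $b_0>0$. Then no such $\mathrm{k}$-step implicit-explicit multistep method has consistency order $\mathrm{k}+1$; that is, the order conditions $$\sum_{j=0}^{\mathrm{k}-1}a_j=1,\qquad \sum_{j=0}^{\mathrm{k}-1}a_j\,\partial_\tau t_{n-j}^{\ell}=\ell\sum_{j=0}^{\mathrm{k}}b_j\,t_{n-j}^{\ell-1}=\ell\sum_{j=0}^{\mathrm{k}-1}c_j\,t_{n-j-1}^{\ell-1}\quad\text{for }1\le\ell\le\mathrm{k}+1,$$ cannot all hold (for $n\ge\mathrm{k}$ on a uniform mesh $t_j=j\tau$).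
   Context: The method in question is $\sum_{j=0}^{\mathrm{k}-1}a_j\partial_\tau u^{n-j}+\varpi\sum_{j=0}^{\mathrm{k}}b_j\mathcal{L}u^{n-j}=\sum_{j=0}^{\mathrm{k}-1}c_j\mathcal{F}(u^{n-j-1})$, where $\partial_\tau v^m=(v^m-v^{m-1})/\tau$; in the order conditions $\partial_\tau t^\ell_m=(t_m^\ell-t_{m-1}^\ell)/\tau$. The implicit part means $b_0>0$. *)

From HB Require Import structures.
From mathcomp Require Import all_boot all_order all_algebra.
From mathcomp Require Import reals.
Set Implicit Arguments. Unset Strict Implicit. Unset Printing Implicit Defensive.
Import Order.TTheory GRing.Theory Num.Theory.
Local Open Scope ring_scope.

Definition tmesh {R : realType} (tau : R) (m : nat) : R := m%:R * tau.

(* Backward difference quotient of t^l at node m: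
   partial_tau t^l_m = (t_m^l - t_{m-1}^l) / tau  (used only for m >= 1). *)
Definition dtau_pow {R : realType} (tau : R) (l m : nat) : R :=
  (tmesh tau m ^+ l - tmesh tau m.-1 ^+ l) / tau.

(* Order conditions for order k+1 of the k-step IMEX method
   sum_{j<k} a_j d_tau u^{n-j} + w sum_{j<=k} b_j L u^{n-j}
     = sum_{j<k} c_j F(u^{n-j-1}),  at step n on the mesh of width tau. *)
Definition imex_order_conditions {R : realType} (k : nat)
    (a b c : nat -> R) (tau : R) (n : nat) : Prop :=
  \sum_(j < k) a j = 1 /\
  forall l : nat, (1 <= l <= k.+1)%N ->
    \sum_(j < k) a j * dtau_pow tau l (n - j)
      = l%:R * \sum_(j < k.+1) b j * tmesh tau (n - j) ^+ l.-1 /\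
    l%:R * \sum_(j < k.+1) b j * tmesh tau (n - j) ^+ l.-1
      = l%:R * \sum_(j < k) c j * tmesh tau (n - j - 1) ^+ l.-1.

From HB Require Import structures.
From mathcomp Require Import all_boot all_order all_algebra.
From mathcomp Require Import reals.
Import Order.TTheory GRing.Theory Num.Theory.
Local Open Scope ring_scope.

(* At n = k the conditions equating the b- and c-parts say that the weights b_j
   at the nodes t_k, ..., t_0 and the weights c_j at the nodes t_(k-1), ..., t_0
   integrate every polynomial of degree at most k alike.  Applied to the degree-k
   polynomial vanishing at t_(k-1), ..., t_0, this leaves b_0 (t_k - t_(k-1)) ...
   (t_k - t_0) = 0, hence b_0 = 0. *)

Section MomentMatching.
Variable R : idomainType.

Lemma sum_horner_eq_of_moments {p q d : nat} {u v x y : nat -> R} {P : {poly R}} :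
    (forall m, (m < d)%N ->
       \sum_(i < p) u i * x i ^+ m = \sum_(i < q) v i * y i ^+ m) ->
    (size P <= d)%N ->
  \sum_(i < p) u i * P.[x i] = \sum_(i < q) v i * P.[y i].
Proof.
move=> moments sizeP.
under eq_bigr => i _ do rewrite (horner_coef_wide _ sizeP) big_distrr.
under [RHS]eq_bigr => i _ do rewrite (horner_coef_wide _ sizeP) big_distrr.
rewrite exchange_big [RHS]exchange_big; apply: eq_bigr => m _.
under eq_bigr => i _ do rewrite /= mulrCA.
under [RHS]eq_bigr => i _ do rewrite /= mulrCA.
by rewrite -!mulr_sumr moments.
Qed.

Lemma weight0_eq0_of_shifted_moments (k : nat) (b c x : nat -> R) :
    (forall m, (m <= k)%N ->
       \sum_(j < k.+1) b j * x j ^+ m = \sum_(j < k) c j * x j.+1 ^+ m) ->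
    (forall j, (j < k)%N -> x 0%N != x j.+1) ->
  b 0%N = 0.
Proof.
move=> moments x0_new.
pose rs := [seq x j.+1 | j <- iota 0 k].
pose P := \prod_(r <- rs) ('X - r%:P).
have rootP j : (j < k)%N -> P.[x j.+1] = 0.
  by move=> ltjk; apply/eqP; rewrite -/(root P _) root_prod_XsubC map_f ?mem_iota.
have P_x0_neq0 : P.[x 0%N] != 0.
  rewrite -/(root P _) root_prod_XsubC; apply/mapP => -[j].
  by rewrite mem_iota add0n => /x0_new/eqP.
have sizeP : (size P <= k.+1)%N by rewrite size_prod_XsubC size_map size_iota.
have := sum_horner_eq_of_moments (d := k.+1) (y := fun j => x j.+1) moments sizeP.
rewrite big_ord_recl !big1 => [|j _|j _]; try by rewrite rootP ?mulr0.
by rewrite addr0 => /eqP; rewrite mulf_eq0 (negPf P_x0_neq0) orbF => /eqP.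
Qed.

End MomentMatching.

Lemma tmesh_inj {R : realType} {tau : R} : tau != 0 -> injective (tmesh tau).
Proof. by move=> tau_neq0 m n /(mulIf tau_neq0) /eqP; rewrite eqr_nat => /eqP. Qed.

Lemma imex_order_conditions_moments (R : realType) (k : nat) (a b c : nat -> R)
    (tau : R) (n : nat) :
    imex_order_conditions k a b c tau n ->
  forall m, (m <= k)%N ->
    \sum_(j < k.+1) b j * tmesh tau (n - j) ^+ m
      = \sum_(j < k) c j * tmesh tau (n - j - 1) ^+ m.
Proof.
move=> [_ conds] m lemk.
have [_ /mulfI] := conds m.+1 lemk; apply.
by rewrite pnatr_eq0.
Qed.

Theorem proposition3p2 (R : realType) (k : nat) (hk : (1 <= k)%N)
    (a b c : nat -> R) (hb0 : 0 < b 0%N) (tau : R) (htau : 0 < tau) :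
  ~ (forall n : nat, (k <= n)%N -> imex_order_conditions k a b c tau n).
Proof.
move=> /(_ k (leqnn k)) /imex_order_conditions_moments moments.
suff : b 0%N = 0 by move/eqP; rewrite gt_eqF.
apply: (@weight0_eq0_of_shifted_moments _ k b c (fun j => tmesh tau (k - j))).
- move=> m lemk; rewrite moments //; apply: eq_bigr => j _.
  by rewrite subn1 subnS.
- move=> j ltjk; rewrite (inj_eq (tmesh_inj (lt0r_neq0 htau))).
  by rewrite subn0 neq_ltn ltn_subrL /= (leq_ltn_trans (leq0n j) ltjk) orbT.
Qed.
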